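(* There is a universal constant $C<\infty$ such that for every power of two $L\ge2$, every $l\in\{1,2,4,\dots,\frac L2\}$ and every $\hat D\ge C$, $$\ln\#\Big\{\bar h\ :\ \max_{\rho}\Big(\frac{l}{\rho}\Big)^2\frac{D(\bar h_\rho)}{L}<\hat D\Big\}\le C\,\frac{L}{l}\,\ln\hat D,$$ where $\bar h$ ranges over functions $\bar h:\{0,2l,4l,\dots,L\}\to2l\mathbb Z$ with $\bar h(0)=\bar h(L)=0$, and $\rho$ ranges over the dyadic scales $\{2l,4l,\dots,\frac L2\}$ (a maximum over the empty set being $0$).
   Context: Each such $\bar h$ is identified with the function on $\{0,\dots,L\}$ that agrees with $\bar h$ on $2l\mathbb Z\cap[0,L]$ and is affine in between. For a function $h$ on $\{0,\dots,L\}$ and dyadic $\rho\in\{1,\dots,L\}$, $h_{\ge\rho}$ is the function on $\{0,\dots,L\}$ agreeing with $h$ on $\rho\mathbb Z\cap[0,L]$ and affine between consecutive points of $\rho\mathbb Z\cap[0,L]$; for $\rho\le L/2$, $h_\rho:=h_{\ge\rho}-h_{\ge2\rho}$. $D(h)=\frac12\sum_{x=1}^L(h(x)-h(x-1))^2$. *)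

From Stdlib Require Import Reals Lra Lia ZArith Arith List.
Open Scope R_scope.

(* h_{>= rho}: agrees with h on rho*Z and is affine between consecutive
   points of rho*Z (functions on {0..L} are modelled as nat -> R). *)
Definition interp (rho : nat) (h : nat -> R) : nat -> R :=
  fun x =>
    let a := ((x / rho) * rho)%nat in
    let t := (x mod rho)%nat in
    h a + (INR t / INR rho) * (h (a + rho)%nat - h a).

Definition hband (rho : nat) (h : nat -> R) : nat -> R :=
  fun x => interp rho h x - interp (2 * rho) h x.

Definition Dir (L : nat) (h : nat -> R) : R :=
  / 2 * sum_f_R0 (fun i => (h (S i) - h i) ^ 2) (L - 1).

(* A coarse function hbar : {0,2l,...,L} -> 2l Z with L = 2^n, l = 2^k is
   encoded by the list s of integers with hbar(j*2l) = 2l * s_j,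
   j = 0 .. L/(2l). *)
Definition is_hbar (n k : nat) (s : list Z) : Prop :=
  length s = (2 ^ n / 2 ^ (S k) + 1)%nat /\
  nth 0 s 0%Z = 0%Z /\
  nth (2 ^ n / 2 ^ (S k)) s 0%Z = 0%Z.

Definition hbar_ext (k : nat) (s : list Z) : nat -> R :=
  interp (2 ^ S k) (fun x => INR (2 ^ S k) * IZR (nth (x / 2 ^ S k) s 0%Z)).

Definition maxR (xs : list R) : R := fold_right Rmax 0 xs.

(* max over dyadic rho in {2l, 4l, ..., L/2} = {2^j : k+1 <= j <= n-1}
   of (l/rho)^2 D(h_rho)/L *)
Definition scale_energy (n k : nat) (h : nat -> R) : R :=
  maxR (map (fun j => (INR (2 ^ k) / INR (2 ^ j)) ^ 2
                      * Dir (2 ^ n) (hband (2 ^ j) h) / INR (2 ^ n))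
            (seq (S k) (n - 1 - k))).

From Stdlib Require Import Reals Lra Lia ZArith Arith List.
Open Scope R_scope.

(* Write hbar(2l j) = 2l s_j, where L = 2l 2^P and s : {0..2^P} -> Z vanishes at both ends.
   At the scale rho = 2l 2^p the band h_rho is, on each period of length 2 rho, a tent of
   height l d_{p,q}, where d_{p,q} = 2 s_{(2q+1)2^p} - s_{2q 2^p} - s_{(2q+2)2^p} is an integer
   second difference; hence the energy bound at that scale gives
   sum_q d_{p,q}^2 <= 64 16^p D 2^(P-1-p).  The second differences determine s.  With
   c_p = 1 + 64 16^p D, AM-GM gives every admissible vector (d_{p,q}) the weight
   prod c_p / (1 + d_{p,q}^2) >= 1, while the weights of all integer vectors add up to at
   most prod_p (6 c_p)^(2^(P-1-p)) <= D^(15 2^P), because sum_x 1/(1+x^2) <= 6.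
   Taking logarithms, 15 2^P = 7.5 L/l. *)

Definition lsum {A : Type} (f : A -> R) (l : list A) : R :=
  fold_right (fun a acc => f a + acc) 0 l.

Definition lprod {A : Type} (f : A -> R) (l : list A) : R :=
  fold_right (fun a acc => f a * acc) 1 l.

Section ListSums.
Context {A : Type}.
Implicit Types (f g : A -> R) (l : list A).

Lemma lsum_app f l1 l2 : lsum f (l1 ++ l2) = lsum f l1 + lsum f l2.
Proof. induction l1; simpl; [lra|]. rewrite IHl1; lra. Qed.

Lemma lsum_ext f g l : (forall x, In x l -> f x = g x) -> lsum f l = lsum g l.
Proof. induction l; simpl; intros H; auto. rewrite H, IHl; auto. Qed.

Lemma lsum_le f g l : (forall x, In x l -> f x <= g x) -> lsum f l <= lsum g l.
Proof.
  induction l as [|a l IH]; simpl; intros H; [lra|].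
  pose proof (H a (or_introl eq_refl)). pose proof (IH (fun x Hx => H x (or_intror Hx))). lra.
Qed.

Lemma lsum_nonneg f l : (forall x, 0 <= f x) -> 0 <= lsum f l.
Proof. intros H; induction l; simpl; [lra|]. pose proof (H a); lra. Qed.

Lemma lsum_scal (c : R) f l : lsum (fun x => c * f x) l = c * lsum f l.
Proof. induction l; simpl; [lra|]. rewrite IHl; lra. Qed.

Lemma lsum_const (c : R) l : lsum (fun _ => c) l = INR (length l) * c.
Proof. induction l; simpl length; [simpl; lra|]. rewrite S_INR; simpl; rewrite IHl; lra. Qed.

Lemma lsum_incl (eq_dec : forall x y : A, {x = y} + {x <> y}) f (T U : list A) :
  (forall x, 0 <= f x) -> NoDup T -> incl T U -> lsum f T <= lsum f U.
Proof.
  intros Hf; revert U; induction T as [|a T IH]; intros U HN HI; simpl.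
  - apply lsum_nonneg; auto.
  - inversion HN as [|? ? HaT HNT]; subst.
    destruct (in_split a U (HI a (or_introl eq_refl))) as [U1 [U2 ->]].
    assert (HT : lsum f T <= lsum f (U1 ++ U2)).
    { apply IH; auto. intros b Hb.
      assert (Hb' : In b (U1 ++ a :: U2)) by (apply HI; right; auto).
      apply in_app_or in Hb'. apply in_or_app.
      destruct Hb' as [H|[H|H]]; auto. subst; contradiction. }
    rewrite lsum_app in HT |- *. simpl. lra.
Qed.

Lemma length_le_lsum_weight (eq_dec : forall x y : A, {x = y} + {x <> y})
  (w : A -> R) (T U : list A) :
  (forall x, 0 <= w x) -> NoDup T -> incl T U -> (forall x, In x T -> 1 <= w x) ->
  INR (length T) <= lsum w U.
Proof.
  intros Hw HN HI H1.
  rewrite <- (Rmult_1_r (INR (length T))), <- lsum_const.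
  apply Rle_trans with (lsum w T); [apply lsum_le; auto| apply lsum_incl; auto].
Qed.

Lemma lprod_app f l1 l2 : lprod f (l1 ++ l2) = lprod f l1 * lprod f l2.
Proof. induction l1; simpl; [lra|]. rewrite IHl1; lra. Qed.

Lemma lprod_ext f g l : (forall x, In x l -> f x = g x) -> lprod f l = lprod g l.
Proof. induction l; simpl; intros H; auto. rewrite H, IHl; auto. Qed.

Lemma lprod_nonneg f l : (forall x, In x l -> 0 <= f x) -> 0 <= lprod f l.
Proof.
  induction l; simpl; intros H; [lra|].
  apply Rmult_le_pos; [apply H; left | apply IHl; intros; apply H; right]; auto.
Qed.

Lemma lprod_le f g l :
  (forall x, In x l -> 0 <= f x <= g x) -> lprod f l <= lprod g l.
Proof.
  induction l; simpl; intros H; [lra|].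
  apply Rmult_le_compat; try apply H; try (left; reflexivity).
  - apply lprod_nonneg. intros x Hx. apply H; right; auto.
  - apply IHl. intros x Hx; apply H; right; auto.
Qed.

Lemma lprod_pow f l (m : nat) : lprod (fun x => f x ^ m) l = lprod f l ^ m.
Proof. induction l; simpl; [symmetry; apply pow1|]. rewrite IHl, Rpow_mult_distr; reflexivity. Qed.

Lemma lprod_repeat f (a : A) (m : nat) : lprod f (repeat a m) = f a ^ m.
Proof. induction m; simpl; [reflexivity|]. rewrite IHm; reflexivity. Qed.

End ListSums.

Lemma lsum_map {A B} (f : B -> R) (g : A -> B) l : lsum f (map g l) = lsum (fun x => f (g x)) l.
Proof. induction l; simpl; auto. rewrite IHl; auto. Qed.

Lemma lsum_flat_map {A B} (f : B -> R) (g : A -> list B) l :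
  lsum f (flat_map g l) = lsum (fun x => lsum f (g x)) l.
Proof. induction l; simpl; auto. rewrite lsum_app, IHl; auto. Qed.

Lemma lprod_flat_map {A B} (f : B -> R) (g : A -> list B) l :
  lprod f (flat_map g l) = lprod (fun x => lprod f (g x)) l.
Proof. induction l; simpl; auto. rewrite lprod_app, IHl; auto. Qed.

Lemma lsum_seq_shift (F : nat -> R) c d b :
  lsum F (seq (c + d) b) = lsum (fun t => F (c + t)%nat) (seq d b).
Proof.
  revert d; induction b; intros d; simpl; auto.
  replace (S (c + d)) with (c + S d)%nat by lia. rewrite IHb; auto.
Qed.

Lemma lsum_seq_mul (F : nat -> R) a b :
  lsum F (seq 0 (a * b)) = lsum (fun q => lsum (fun t => F (q * b + t)%nat) (seq 0 b)) (seq 0 a).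
Proof.
  induction a; [simpl; auto|].
  replace (S a * b)%nat with (a * b + b)%nat by lia.
  rewrite seq_app, lsum_app, IHa, (seq_S a 0), lsum_app. simpl.
  rewrite <- (lsum_seq_shift F (a * b) 0 b), Nat.add_0_r. lra.
Qed.

Lemma lsum_telescope (F : nat -> R) a m :
  lsum (fun i => F (S i) - F i) (seq a m) = F (a + m)%nat - F a.
Proof.
  revert a; induction m; intros a; simpl.
  - rewrite Nat.add_0_r; lra.
  - rewrite IHm. replace (S a + m)%nat with (a + S m)%nat by lia. lra.
Qed.

Lemma sum_f_R0_lsum (F : nat -> R) m : sum_f_R0 F m = lsum F (seq 0 (S m)).
Proof.
  induction m; [simpl; lra|].
  simpl sum_f_R0. rewrite IHm, (seq_S (S m) 0), lsum_app. simpl. lra.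
Qed.

(** * Weighted counting of integer vectors *)

Fixpoint boxes {A : Type} (Rg : list A) (m : nat) : list (list A) :=
  match m with
  | O => nil :: nil
  | S m => flat_map (fun x => map (cons x) (boxes Rg m)) Rg
  end.

Fixpoint prodw {A : Type} (gs : list (A -> R)) (t : list A) : R :=
  match gs, t with
  | g :: gs', x :: t' => g x * prodw gs' t'
  | _, _ => 1
  end.

Section Boxes.
Context {A : Type}.
Implicit Types (Rg : list A) (gs : list (A -> R)).

Lemma in_boxes Rg m t :
  length t = m -> (forall x, In x t -> In x Rg) -> In t (boxes Rg m).
Proof.
  revert t; induction m; intros t Hl Hx; destruct t as [|x t]; simpl in *; try lia; auto.
  apply in_flat_map. exists x. split; [apply Hx; auto|]. apply in_map. apply IHm; auto.
Qed.

Lemma lsum_prodw_boxes Rg gs :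
  lsum (prodw gs) (boxes Rg (length gs)) = lprod (fun g => lsum g Rg) gs.
Proof.
  induction gs as [|g gs IH]; simpl; [lra|].
  rewrite lsum_flat_map, <- IH, Rmult_comm, <- lsum_scal.
  apply lsum_ext; intros x _.
  rewrite lsum_map, Rmult_comm, <- lsum_scal. reflexivity.
Qed.

Lemma prodw_nonneg gs t : (forall g, In g gs -> forall x, 0 <= g x) -> 0 <= prodw gs t.
Proof.
  revert t; induction gs as [|g gs IH]; intros t H; destruct t; simpl; try lra.
  apply Rmult_le_pos; [apply H; left; auto| apply IH; intros; apply H; right; auto].
Qed.

Lemma prodw_app gs1 gs2 t1 t2 :
  length gs1 = length t1 -> prodw (gs1 ++ gs2) (t1 ++ t2) = prodw gs1 t1 * prodw gs2 t2.
Proof.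
  revert t1; induction gs1; intros t1 Hl; destruct t1; simpl in *; try lia; [lra|].
  rewrite IHgs1 by lia. lra.
Qed.

Lemma prodw_flat_map_ge1 {I : Type} (G : I -> list (A -> R)) (B : I -> list A) (l : list I) :
  (forall i, In i l -> length (G i) = length (B i)) ->
  (forall i, In i l -> 1 <= prodw (G i) (B i)) ->
  1 <= prodw (flat_map G l) (flat_map B l).
Proof.
  induction l as [|i l IH]; simpl; intros HL H; [lra|].
  rewrite prodw_app by auto.
  assert (1 <= prodw (G i) (B i)) by auto.
  assert (1 <= prodw (flat_map G l) (flat_map B l)) by auto.
  nra.
Qed.

End Boxes.

Definition rangeZ (K : nat) : list Z :=
  map (fun i => (Z.of_nat i - Z.of_nat K)%Z) (seq 0 (2 * K + 1)).

Lemma in_rangeZ K x : (- Z.of_nat K <= x <= Z.of_nat K)%Z -> In x (rangeZ K).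
Proof.
  intros H. unfold rangeZ. apply in_map_iff. exists (Z.to_nat (x + Z.of_nat K)).
  split; [lia|]. apply in_seq. lia.
Qed.

Lemma entries_bounded (T : list (list Z)) :
  exists K, forall t, In t T -> forall x, In x t -> (- Z.of_nat K <= x <= Z.of_nat K)%Z.
Proof.
  exists (list_max (map Z.to_nat (map Z.abs (concat T)))).
  intros t Ht x Hx.
  assert (Hin : In (Z.to_nat (Z.abs x)) (map Z.to_nat (map Z.abs (concat T)))).
  { apply in_map, in_map, in_concat. eauto. }
  pose proof (proj1 (Forall_forall _ _) (proj1 (list_max_le _ _) (Nat.le_refl _)) _ Hin) as Hle.
  cbv beta in Hle. lia.
Qed.

(* On the integers [1 / (1 + z^2) <= soft_sign (z + 1) - soft_sign z], so the sum telescopes. *)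
Definition soft_sign (x : R) : R := 3 * x / (1 + Rabs x).

Lemma soft_sign_bound x : -3 <= soft_sign x <= 3.
Proof.
  unfold soft_sign. pose proof (Rabs_pos x).
  assert (0 < 1 + Rabs x) by lra.
  split; apply Rmult_le_reg_r with (1 + Rabs x); auto;
    unfold Rdiv; rewrite Rmult_assoc, Rinv_l by lra;
    destruct (Rle_dec 0 x); [rewrite Rabs_right by lra | rewrite Rabs_left by lra
                            | rewrite Rabs_right by lra | rewrite Rabs_left by lra]; lra.
Qed.

Lemma soft_sign_step (z : Z) : 1 / (1 + IZR z ^ 2) <= soft_sign (IZR z + 1) - soft_sign (IZR z).
Proof.
  unfold soft_sign. destruct (Z_le_gt_dec 0 z) as [Hz|Hz].
  - assert (Hx : IZR z = 0 \/ 1 <= IZR z).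
    { destruct (Z.eq_dec z 0) as [->|]; [left; reflexivity| right; apply IZR_le; lia]. }
    apply IZR_le in Hz. set (x := IZR z) in *.
    rewrite (Rabs_right x), (Rabs_right (x + 1)) by lra.
    replace (3 * (x + 1) / (1 + (x + 1)) - 3 * x / (1 + x)) with (3 / ((x + 1) * (x + 2)))
      by (field; lra).
    apply Rmult_le_reg_r with ((1 + x ^ 2) * ((x + 1) * (x + 2))); [apply Rmult_lt_0_compat; nra|].
    field_simplify; [destruct Hx; nra | nra | nra].
  - assert (Hx : IZR z = -1 \/ IZR z <= -2).
    { destruct (Z.eq_dec z (-1)) as [->|]; [left; reflexivity| right; apply IZR_le; lia]. }
    set (x := IZR z) in *.
    destruct Hx as [Hm|Hx].
    + rewrite Hm. replace (-1 + 1) with 0 by ring.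
      rewrite Rabs_R0, Rabs_left by lra. field_simplify; lra.
    + rewrite (Rabs_left x), (Rabs_left (x + 1)) by lra.
      replace (3 * (x + 1) / (1 + - (x + 1)) - 3 * x / (1 + - x)) with (3 / ((- x) * (1 - x)))
        by (field; lra).
      apply Rmult_le_reg_r with ((1 + x ^ 2) * ((- x) * (1 - x))); [apply Rmult_lt_0_compat; nra|].
      field_simplify; nra.
Qed.

Lemma lsum_rangeZ_inv_le K : lsum (fun x => 1 / (1 + IZR x ^ 2)) (rangeZ K) <= 6.
Proof.
  unfold rangeZ. rewrite lsum_map.
  set (F := fun i : nat => soft_sign (IZR (Z.of_nat i - Z.of_nat K))).
  apply Rle_trans with (lsum (fun i => F (S i) - F i) (seq 0 (2 * K + 1))).
  - apply lsum_le. intros i _. unfold F.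
    replace (IZR (Z.of_nat (S i) - Z.of_nat K)) with (IZR (Z.of_nat i - Z.of_nat K) + 1)
      by (rewrite <- plus_IZR; f_equal; lia).
    apply soft_sign_step.
  - rewrite lsum_telescope. unfold F.
    pose proof (soft_sign_bound (IZR (Z.of_nat (0 + (2 * K + 1)) - Z.of_nat K))).
    pose proof (soft_sign_bound (IZR (Z.of_nat 0 - Z.of_nat K))). lra.
Qed.

Definition sumsq (b : list Z) : R := lsum (fun x => IZR x ^ 2) b.

Definition block_weight (c : R) (x : Z) : R := c / (1 + IZR x ^ 2).

Lemma block_weight_nonneg c x : 0 < c -> 0 <= block_weight c x.
Proof.
  intros Hc. unfold block_weight. pose proof (pow2_ge_0 (IZR x)).
  apply Rlt_le, Rdiv_lt_0_compat; lra.
Qed.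

Lemma exp_one_sub_le_inv y : 0 < y -> exp (1 - y) <= / y.
Proof.
  intros Hy. pose proof (exp_ineq1_le (y - 1)).
  assert (E : exp (1 - y) * exp (y - 1) = 1)
    by (rewrite <- exp_plus, <- exp_0; f_equal; ring).
  pose proof (exp_pos (1 - y)).
  apply Rmult_le_reg_l with y; auto. rewrite Rinv_r by lra. nra.
Qed.

(* The multiplicative form of AM-GM, [y <= c e^(y/c - 1)], applied to [y = 1 + x^2]. *)
Lemma prodw_block_weight_ge_exp c b : 0 < c ->
  exp (INR (length b) - (INR (length b) + sumsq b) / c)
  <= prodw (repeat (block_weight c) (length b)) b.
Proof.
  intros Hc. unfold sumsq. induction b as [|x b IH].
  - simpl. replace (0 - (0 + 0) / c) with 0 by (field; lra). rewrite exp_0; lra.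
  - change (length (x :: b)) with (S (length b)).
    change (repeat ?g (S ?n)) with (g :: repeat g n).
    change (prodw (?g :: ?gs) (x :: b)) with (g x * prodw gs b).
    change (lsum ?f (x :: b)) with (f x + lsum f b). rewrite S_INR.
    set (y := (1 + IZR x ^ 2) / c).
    assert (Hy : 0 < y) by (unfold y; pose proof (pow2_ge_0 (IZR x)); apply Rdiv_lt_0_compat; lra).
    replace (INR (length b) + 1
             - (INR (length b) + 1 + (IZR x ^ 2 + lsum (fun x => IZR x ^ 2) b)) / c)
      with ((1 - y) + (INR (length b) - (INR (length b) + lsum (fun x => IZR x ^ 2) b) / c))
      by (unfold y; field; lra).
    rewrite exp_plus.
    apply Rmult_le_compat; try (left; apply exp_pos); auto.
    replace (block_weight c x) with (/ y)
      by (unfold y, block_weight; field; pose proof (pow2_ge_0 (IZR x)); lra).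
    apply exp_one_sub_le_inv; auto.
Qed.

Lemma prodw_block_weight_ge1 c b : 1 <= c -> sumsq b <= INR (length b) * (c - 1) ->
  1 <= prodw (repeat (block_weight c) (length b)) b.
Proof.
  intros Hc Hs. eapply Rle_trans; [|apply prodw_block_weight_ge_exp; lra].
  assert ((INR (length b) + sumsq b) / c <= INR (length b)).
  { apply Rmult_le_reg_r with c; [lra|]. unfold Rdiv; rewrite Rmult_assoc, Rinv_l by lra. lra. }
  pose proof (exp_ineq1_le (INR (length b) - (INR (length b) + sumsq b) / c)). lra.
Qed.

Lemma lsum_block_weight_le c K : 0 <= c -> lsum (block_weight c) (rangeZ K) <= 6 * c.
Proof.
  intros Hc.
  rewrite (lsum_ext _ (fun x => c * (1 / (1 + IZR x ^ 2)))), lsum_scal.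
  - pose proof (lsum_rangeZ_inv_le K). nra.
  - intros x _. unfold block_weight. field. pose proof (pow2_ge_0 (IZR x)); lra.
Qed.

(* Every vector of [T] has weight at least 1, and the total weight of a box factorizes. *)
Lemma count_block_vectors (l : list nat) (M : nat -> nat) (c : nat -> R) (T : list (list Z)) :
  (forall p, 1 <= c p) -> NoDup T ->
  (forall t, In t T -> exists bs : nat -> list Z, t = flat_map bs l /\
     forall p, In p l -> length (bs p) = M p /\ sumsq (bs p) <= INR (M p) * (c p - 1)) ->
  INR (length T) <= lprod (fun p => (6 * c p) ^ M p) l.
Proof.
  intros Hc HN HT.
  destruct (entries_bounded T) as [K HK].
  set (gs := flat_map (fun p => repeat (block_weight (c p)) (M p)) l).
  assert (Hgs : forall g, In g gs -> forall x, 0 <= g x).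
  { intros g Hg x. apply in_flat_map in Hg. destruct Hg as [p [_ Hp]].
    apply repeat_spec in Hp. subst. apply block_weight_nonneg. specialize (Hc p); lra. }
  apply Rle_trans with (lsum (prodw gs) (boxes (rangeZ K) (length gs))).
  - apply length_le_lsum_weight; auto.
    + apply list_eq_dec, Z.eq_dec.
    + intros t; apply prodw_nonneg; auto.
    + intros t Ht. destruct (HT t Ht) as [bs [-> Hbs]]. apply in_boxes.
      * unfold gs. rewrite !length_flat_map. f_equal. apply map_ext_in.
        intros p Hp. rewrite repeat_length. apply Hbs; auto.
      * intros x Hx. apply in_rangeZ. apply (HK _ Ht x Hx).
    + intros t Ht. destruct (HT t Ht) as [bs [-> Hbs]]. unfold gs.
      apply prodw_flat_map_ge1; intros p Hp; destruct (Hbs p Hp) as [Hlen Hsq].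
      * rewrite repeat_length; auto.
      * rewrite <- Hlen. apply prodw_block_weight_ge1; auto. rewrite Hlen; auto.
  - rewrite lsum_prodw_boxes. unfold gs. rewrite lprod_flat_map.
    apply lprod_le. intros p _. rewrite lprod_repeat. split.
    + apply pow_le, lsum_nonneg. intros x. apply block_weight_nonneg. specialize (Hc p); lra.
    + apply pow_incr. split.
      * apply lsum_nonneg. intros x. apply block_weight_nonneg. specialize (Hc p); lra.
      * apply lsum_block_weight_le. specialize (Hc p); lra.
Qed.

Definition level_size (P p : nat) : nat := 2 ^ (P - 1 - p).

(* The slack [D^(4P+15)] makes the induction on [P] go through: the product at [P+1]
   is the square of the one at [P] times one new factor. *)
Lemma lprod_levels_le (D : R) (x : nat -> R) (P : nat) :
  1 <= D -> (forall p, 0 <= x p <= D ^ (4 * p + 11)) ->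
  lprod (fun p => x p ^ level_size P p) (seq 0 P) * D ^ (4 * P + 15) <= D ^ (15 * 2 ^ P).
Proof.
  intros HD Hx. induction P as [|P IH]; [simpl; lra|].
  rewrite seq_S, lprod_app.
  rewrite (lprod_ext _ (fun p => (x p ^ level_size P p) ^ 2)).
  2:{ intros p Hp. apply in_seq in Hp. unfold level_size.
      replace (S P - 1 - p)%nat with (S (P - 1 - p)) by lia.
      rewrite Nat.pow_succ_r', Nat.mul_comm, pow_mult. reflexivity. }
  rewrite lprod_pow. simpl (lprod _ (_ :: nil)).
  set (Q := lprod (fun p => x p ^ level_size P p) (seq 0 P)) in *.
  assert (HQ : 0 <= Q) by (apply lprod_nonneg; intros; apply pow_le, Hx).
  assert (HDP : 0 <= D ^ (4 * P + 15)) by (apply pow_le; lra).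
  specialize (Hx P).
  replace (level_size (S P) P) with 1%nat
    by (unfold level_size; replace (S P - 1 - P)%nat with 0%nat by lia; reflexivity).
  replace (15 * 2 ^ S P)%nat with (15 * 2 ^ P * 2)%nat by (rewrite Nat.pow_succ_r'; lia).
  rewrite pow_mult, pow_1, Rmult_1_r.
  apply Rle_trans with ((Q * D ^ (4 * P + 15)) ^ 2).
  - replace ((Q * D ^ (4 * P + 15)) ^ 2)
      with (Q ^ 2 * (D ^ (4 * P + 11) * D ^ (4 * S P + 15)))
      by (rewrite <- pow_add, Rpow_mult_distr, <- pow_mult; do 2 f_equal; lia).
    rewrite <- Rmult_assoc.
    apply Rmult_le_compat_r; [apply pow_le; lra|].
    apply Rmult_le_compat_l; [apply pow2_ge_0| apply Hx].
  - apply pow_incr. split; [apply Rmult_le_pos; auto| exact IH].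
Qed.

Definition level_weight (D : R) (p : nat) : R := 1 + 64 * 16 ^ p * D.

Lemma six_level_weight_le (D : R) p : 2 <= D -> 6 * level_weight D p <= D ^ (4 * p + 11).
Proof.
  intros HD. unfold level_weight.
  assert (H16 : 16 ^ p <= D ^ (4 * p)).
  { rewrite pow_mult. apply pow_incr. split; [lra|].
    replace 16 with (2 ^ 4) by ring. apply pow_incr; split; lra. }
  assert (H10 : 2 ^ 10 <= D ^ 10) by (apply pow_incr; split; lra).
  assert (H1 : 1 <= 16 ^ p) by (apply pow_R1_Rle; lra).
  replace (4 * p + 11)%nat with (10 + 4 * p + 1)%nat by lia.
  rewrite !pow_add, pow_1.
  assert (0 <= D ^ 10) by (apply pow_le; lra).
  assert (2 ^ 10 * 16 ^ p * D <= D ^ 10 * D ^ (4 * p) * D)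
    by (apply Rmult_le_compat_r; [lra| apply Rmult_le_compat; lra]).
  simpl (2 ^ 10) in *. nra.
Qed.

(** * Bands of a coarse function and its second differences *)

Lemma interp_at (rho m t : nat) (h : nat -> R) : (t < rho)%nat ->
  interp rho h (m * rho + t)
  = h (m * rho)%nat + INR t / INR rho * (h (m * rho + rho)%nat - h (m * rho)%nat).
Proof.
  intros Ht. unfold interp.
  replace ((m * rho + t) / rho)%nat with m by (apply (Nat.div_unique _ _ _ t); lia).
  replace ((m * rho + t) mod rho)%nat with t by (apply (Nat.mod_unique _ _ m); lia).
  reflexivity.
Qed.

Definition midpoint_defect (rho q : nat) (h : nat -> R) : R :=
  h (q * (2 * rho) + rho)%nat - (h (q * (2 * rho))%nat + h (q * (2 * rho) + 2 * rho)%nat) / 2.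

Lemma hband_at (rho q t : nat) (h : nat -> R) : (1 <= rho)%nat -> (t <= rho)%nat ->
  hband rho h (q * (2 * rho) + t) = INR t / INR rho * midpoint_defect rho q h.
Proof.
  intros Hr Ht. unfold hband, midpoint_defect.
  assert (HR : 0 < INR rho) by (apply lt_0_INR; lia).
  rewrite interp_at by lia. rewrite mult_INR. simpl (INR 2).
  destruct (Nat.eq_dec t rho) as [->|Hne].
  - replace (q * (2 * rho) + rho)%nat with ((2 * q + 1) * rho + 0)%nat by ring.
    rewrite interp_at by lia. simpl (INR 0).
    replace ((2 * q + 1) * rho)%nat with (q * (2 * rho) + rho)%nat by ring.
    rewrite !Nat.add_0_r. field; lra.
  - replace (q * (2 * rho) + t)%nat with (2 * q * rho + t)%nat by ring.
    rewrite interp_at by lia.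
    replace (2 * q * rho)%nat with (q * (2 * rho))%nat by ring.
    field; lra.
Qed.

(* On the rising half of each period [2 rho] the band [hband rho h] has slope
   [midpoint_defect / rho]; the falling half is dropped. *)
Lemma Dir_hband_ge (rho M : nat) (h : nat -> R) : (1 <= rho)%nat -> (1 <= M)%nat ->
  / 2 * lsum (fun q => midpoint_defect rho q h ^ 2 / INR rho) (seq 0 M)
  <= Dir (M * (2 * rho)) (hband rho h).
Proof.
  intros Hr HM. unfold Dir.
  rewrite sum_f_R0_lsum. replace (S (M * (2 * rho) - 1)) with (M * (2 * rho))%nat by nia.
  apply Rmult_le_compat_l; [lra|].
  rewrite lsum_seq_mul. apply lsum_le. intros q _.
  replace (seq 0 (2 * rho)) with (seq 0 (rho + rho)) by (f_equal; lia).
  rewrite seq_app, lsum_app.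
  match goal with |- _ <= _ + ?falling => assert (0 <= falling) end.
  { apply lsum_nonneg; intros; apply pow2_ge_0. }
  assert (HR : 0 < INR rho) by (apply lt_0_INR; lia).
  rewrite (lsum_ext _ (fun _ => (midpoint_defect rho q h / INR rho) ^ 2)).
  - rewrite lsum_const, length_seq.
    replace (INR rho * (midpoint_defect rho q h / INR rho) ^ 2)
      with (midpoint_defect rho q h ^ 2 / INR rho) by (field; lra).
    lra.
  - intros t Ht. apply in_seq in Ht.
    replace (S (q * (2 * rho) + t)) with (q * (2 * rho) + S t)%nat by lia.
    rewrite !hband_at by lia. rewrite S_INR. f_equal. field. lra.
Qed.

Lemma hbar_ext_at k s j : hbar_ext k s (j * 2 ^ S k)%nat = INR (2 ^ S k) * IZR (nth j s 0%Z).
Proof.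
  assert (2 ^ S k <> 0)%nat by (apply Nat.pow_nonzero; lia).
  unfold hbar_ext. rewrite <- (Nat.add_0_r (j * 2 ^ S k)) at 1.
  rewrite interp_at, Nat.div_mul by lia.
  simpl (INR 0). lra.
Qed.

Definition second_diff (s : list Z) (p q : nat) : Z :=
  (2 * nth ((2 * q + 1) * 2 ^ p) s 0 - nth (2 * q * 2 ^ p) s 0 - nth ((2 * q + 2) * 2 ^ p) s 0)%Z.

Lemma midpoint_defect_hbar_ext k s p q :
  midpoint_defect (2 ^ (S k + p)) q (hbar_ext k s) = INR (2 ^ k) * IZR (second_diff s p q).
Proof.
  unfold midpoint_defect, second_diff. rewrite Nat.pow_add_r.
  replace (q * (2 * (2 ^ S k * 2 ^ p)) + 2 ^ S k * 2 ^ p)%nat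
    with ((2 * q + 1) * 2 ^ p * 2 ^ S k)%nat by ring.
  replace (q * (2 * (2 ^ S k * 2 ^ p)))%nat with (2 * q * 2 ^ p * 2 ^ S k)%nat by ring.
  replace (2 * q * 2 ^ p * 2 ^ S k + 2 * (2 ^ S k * 2 ^ p))%nat
    with ((2 * q + 2) * 2 ^ p * 2 ^ S k)%nat by ring.
  rewrite !hbar_ext_at, !minus_IZR, mult_IZR, Nat.pow_succ_r', mult_INR.
  simpl (INR 2). simpl (IZR 2).
  field.
Qed.

Definition level_block (P : nat) (s : list Z) (p : nat) : list Z :=
  map (second_diff s p) (seq 0 (level_size P p)).

Definition second_diffs (P : nat) (s : list Z) : list Z := flat_map (level_block P s) (seq 0 P).

Lemma length_level_block P s p : length (level_block P s p) = level_size P p.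
Proof. unfold level_block. rewrite length_map, length_seq. reflexivity. Qed.

Lemma app_inj_length {A : Type} (l1 l2 l1' l2' : list A) :
  length l1 = length l1' -> l1 ++ l2 = l1' ++ l2' -> l1 = l1' /\ l2 = l2'.
Proof.
  revert l1'; induction l1; intros l1' Hl He; destruct l1'; simpl in *; try lia; auto.
  injection He; intros He' ->. destruct (IHl1 l1') as [-> ->]; auto.
Qed.

Lemma flat_map_inj_length {A B : Type} (f g : A -> list B) l :
  (forall x, length (f x) = length (g x)) -> flat_map f l = flat_map g l ->
  forall x, In x l -> f x = g x.
Proof.
  intros Hl; induction l as [|a l IH]; simpl; intros He x Hx; [contradiction|].
  destruct (app_inj_length _ _ _ _ (Hl a) He) as [H1 H2].
  destruct Hx as [->|Hx]; auto.
Qed.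

Lemma map_eq_in {A B : Type} (f g : A -> B) l : map f l = map g l -> forall x, In x l -> f x = g x.
Proof.
  induction l; simpl; intros He x Hx; [contradiction|]. injection He; intros.
  destruct Hx as [->|Hx]; auto.
Qed.

(* By induction on [m], the values on the grid of mesh [2^(P-m)] are recovered from
   the coarser grid and the second differences at level [P-1-m]. *)
Lemma nth_eq_of_second_diff (P : nat) (s s' : list Z) :
  nth 0 s 0%Z = nth 0 s' 0%Z -> nth (2 ^ P) s 0%Z = nth (2 ^ P) s' 0%Z ->
  (forall p q, (p < P)%nat -> (q < level_size P p)%nat -> second_diff s p q = second_diff s' p q) ->
  forall j, (j <= 2 ^ P)%nat -> nth j s 0%Z = nth j s' 0%Z.
Proof.
  intros H0 HP Hd.
  assert (Hm : forall m, (m <= P)%nat -> forall j, (j <= 2 ^ m)%nat ->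
                 nth (j * 2 ^ (P - m)) s 0%Z = nth (j * 2 ^ (P - m)) s' 0%Z).
  { induction m as [|m IH]; intros Hm j Hj.
    - rewrite Nat.sub_0_r. simpl in Hj. destruct j as [|[|j]]; try lia.
      + exact H0.
      + rewrite Nat.mul_1_l. exact HP.
    - assert (Hsplit : (2 ^ (P - m) = 2 * 2 ^ (P - S m))%nat)
        by (replace (P - m)%nat with (S (P - S m)) by lia; apply Nat.pow_succ_r').
      rewrite Nat.pow_succ_r' in Hj.
      destruct (Nat.Even_or_Odd j) as [[j' ->]|[j' ->]].
      + replace (2 * j' * 2 ^ (P - S m))%nat with (j' * 2 ^ (P - m))%nat by (rewrite Hsplit; ring).
        apply IH; lia.
      + assert (Hq : (j' < level_size P (P - S m))%nat)
          by (unfold level_size; replace (P - 1 - (P - S m))%nat with m by lia; lia).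
        pose proof (Hd (P - S m)%nat j' ltac:(lia) Hq) as H. unfold second_diff in H.
        pose proof (IH ltac:(lia) j' ltac:(lia)) as E0.
        pose proof (IH ltac:(lia) (S j') ltac:(lia)) as E2.
        replace (2 * j' * 2 ^ (P - S m))%nat with (j' * 2 ^ (P - m))%nat in H
          by (rewrite Hsplit; ring).
        replace ((2 * j' + 2) * 2 ^ (P - S m))%nat with (S j' * 2 ^ (P - m))%nat in H
          by (rewrite Hsplit; ring).
        lia. }
  intros j Hj. specialize (Hm P (le_n _) j Hj).
  rewrite Nat.sub_diag, Nat.pow_0_r, Nat.mul_1_r in Hm. exact Hm.
Qed.

Definition pinned (P : nat) (s : list Z) : Prop :=
  length s = (2 ^ P + 1)%nat /\ nth 0 s 0%Z = 0%Z /\ nth (2 ^ P) s 0%Z = 0%Z.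

Lemma is_hbar_pinned k P s : is_hbar (S k + P) k s -> pinned P s.
Proof.
  unfold is_hbar, pinned.
  rewrite Nat.pow_add_r, Nat.mul_comm, Nat.div_mul by (apply Nat.pow_nonzero; lia). auto.
Qed.

Lemma second_diffs_inj P s s' : pinned P s -> pinned P s' ->
  second_diffs P s = second_diffs P s' -> s = s'.
Proof.
  intros [L1 [A1 B1]] [L2 [A2 B2]] HE.
  apply nth_ext with 0%Z 0%Z; [congruence|]. intros j Hj.
  apply (nth_eq_of_second_diff P); [congruence | congruence | | lia].
  intros p q Hp Hq.
  assert (Hlen : forall p, length (level_block P s p) = length (level_block P s' p))
    by (intros; rewrite !length_level_block; reflexivity).
  assert (Hb := flat_map_inj_length _ _ _ Hlen HE).
  apply (map_eq_in _ _ _ (Hb p ltac:(apply in_seq; lia))). apply in_seq; lia.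
Qed.

Lemma maxR_ge x xs : In x xs -> x <= maxR xs.
Proof.
  induction xs; simpl; intros H; [contradiction|].
  destruct H as [->|H]; [apply Rmax_l|]. eapply Rle_trans; [apply IHxs; auto| apply Rmax_r].
Qed.

Lemma scale_term_le n k h j : (k < j < n)%nat ->
  (INR (2 ^ k) / INR (2 ^ j)) ^ 2 * Dir (2 ^ n) (hband (2 ^ j) h) / INR (2 ^ n)
  <= scale_energy n k h.
Proof.
  intros Hj. unfold scale_energy. apply maxR_ge.
  apply in_map_iff. exists j. split; [reflexivity|]. apply in_seq. lia.
Qed.

Lemma lsum_midpoint_defect_hbar_ext k P s p :
  lsum (fun q => midpoint_defect (2 ^ (S k + p)) q (hbar_ext k s) ^ 2 / INR (2 ^ (S k + p)))
       (seq 0 (level_size P p))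
  = INR (2 ^ k) ^ 2 / INR (2 ^ (S k + p)) * sumsq (level_block P s p).
Proof.
  unfold sumsq, level_block. rewrite lsum_map, <- lsum_scal.
  apply lsum_ext. intros q _. rewrite midpoint_defect_hbar_ext.
  assert (0 < INR (2 ^ (S k + p))) by (apply lt_0_INR, Nat.neq_0_lt_0, Nat.pow_nonzero; lia).
  field. lra.
Qed.

Lemma sumsq_level_block_le k P D s p : (p < P)%nat ->
  scale_energy (S k + P) k (hbar_ext k s) < D ->
  sumsq (level_block P s p) <= INR (level_size P p) * (64 * 16 ^ p * D).
Proof.
  intros Hp HE.
  set (rho := (2 ^ (S k + p))%nat).
  assert (Hrho : (1 <= rho)%nat) by (pose proof (Nat.pow_nonzero 2 (S k + p)); unfold rho; lia).
  assert (HM : (1 <= level_size P p)%nat)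
    by (pose proof (Nat.pow_nonzero 2 (P - 1 - p)); unfold level_size; lia).
  assert (HL : (2 ^ (S k + P) = level_size P p * (2 * rho))%nat).
  { unfold level_size, rho. rewrite <- Nat.pow_succ_r', <- Nat.pow_add_r. f_equal. lia. }
  pose proof (scale_term_le (S k + P) k (hbar_ext k s) (S k + p) ltac:(lia)) as Hterm.
  pose proof (Dir_hband_ge rho (level_size P p) (hbar_ext k s) Hrho HM) as HDir.
  unfold rho in HDir. rewrite lsum_midpoint_defect_hbar_ext in HDir. fold rho in HDir.
  fold rho in Hterm. rewrite HL in Hterm.
  set (E := Dir (level_size P p * (2 * rho)) (hband rho (hbar_ext k s))) in *.
  set (S2 := sumsq (level_block P s p)) in *.
  set (l := INR (2 ^ k)) in *.
  set (w := 2 ^ p).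
  set (m := INR (level_size P p)) in *.
  assert (Hl : 0 < l) by (apply lt_0_INR, Nat.neq_0_lt_0, Nat.pow_nonzero; lia).
  assert (Hw : 0 < w) by (apply pow_lt; lra).
  assert (Hm : 0 < m) by (apply lt_0_INR; lia).
  assert (Hr : INR rho = 2 * l * w).
  { unfold rho, l, w.
    rewrite Nat.pow_add_r, Nat.pow_succ_r', !mult_INR, (pow_INR 2 p). reflexivity. }
  rewrite mult_INR, mult_INR, Hr in Hterm. fold m in Hterm.
  replace (INR 2) with 2 in Hterm by (simpl; ring).
  rewrite Hr in HDir.
  assert (HE' : E < D * (16 * m * l * w ^ 3)).
  { replace E with ((l / (2 * l * w)) ^ 2 * E / (m * (2 * (2 * l * w))) * (16 * m * l * w ^ 3))
      by (field; lra).
    apply Rmult_lt_compat_r; [|lra]. repeat apply Rmult_lt_0_compat; try lra. }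
  assert (HS : S2 <= 4 * w / l * E).
  { replace S2 with (4 * w / l * (/ 2 * (l ^ 2 / (2 * l * w) * S2))) by (field; lra).
    apply Rmult_le_compat_l; [apply Rlt_le, Rdiv_lt_0_compat; lra| exact HDir]. }
  replace (16 ^ p) with (w ^ 4)
    by (unfold w; rewrite <- pow_mult, Nat.mul_comm, pow_mult; f_equal; ring).
  apply Rle_trans with (4 * w / l * (D * (16 * m * l * w ^ 3))); [|right; field; lra].
  eapply Rle_trans; [exact HS|]. apply Rmult_le_compat_l; [apply Rlt_le, Rdiv_lt_0_compat|]; lra.
Qed.

(** * Counting coarse functions *)

Lemma count_hbar (k P : nat) (D : R) (hs : list (list Z)) :
  2 <= D -> NoDup hs ->
  (forall s, In s hs -> is_hbar (S k + P) k s /\ scale_energy (S k + P) k (hbar_ext k s) < D) ->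
  INR (length hs) <= D ^ (15 * 2 ^ P).
Proof.
  intros HD HN Hhs.
  assert (Hinj : NoDup (map (second_diffs P) hs)).
  { apply NoDup_map_NoDup_ForallPairs; auto. intros s s' Hs Hs'.
    apply second_diffs_inj; apply (is_hbar_pinned k); apply Hhs; auto. }
  assert (Hw : forall p, 1 <= level_weight D p).
  { intros p. unfold level_weight. pose proof (pow_lt 16 p ltac:(lra)). nra. }
  assert (Hcount := count_block_vectors (seq 0 P) (level_size P) (level_weight D) _ Hw Hinj).
  rewrite length_map in Hcount.
  eapply Rle_trans; [apply Hcount|].
  - intros t Ht. apply in_map_iff in Ht. destruct Ht as [s [<- Hs]].
    exists (level_block P s). split; [reflexivity|]. intros p Hp. apply in_seq in Hp.
    split; [apply length_level_block|].
    unfold level_weight. replace (1 + 64 * 16 ^ p * D - 1) with (64 * 16 ^ p * D) by ring.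
    apply (sumsq_level_block_le k); [lia| apply Hhs; auto].
  - pose proof (lprod_levels_le D (fun p => 6 * level_weight D p) P ltac:(lra)) as Hlev.
    assert (1 <= D ^ (4 * P + 15)) by (apply pow_R1_Rle; lra).
    assert (0 <= lprod (fun p => (6 * level_weight D p) ^ level_size P p) (seq 0 P)).
    { apply lprod_nonneg. intros p _. apply pow_le. specialize (Hw p). lra. }
    enough (lprod (fun p => (6 * level_weight D p) ^ level_size P p) (seq 0 P) * D ^ (4 * P + 15)
            <= D ^ (15 * 2 ^ P)) by nra.
    apply Hlev. intros p. split; [specialize (Hw p); lra| apply six_level_weight_le; lra].
Qed.

Lemma ln_le_of_le_pow (m N : nat) (D : R) : 1 <= D -> INR m <= D ^ N -> ln (INR m) <= INR N * ln D.
Proof.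
  intros HD Hm.
  assert (HlnD : 0 <= ln D).
  { rewrite <- ln_1. destruct (Req_dec D 1) as [->|]; [lra|]. left; apply ln_increasing; lra. }
  destruct m as [|m].
  - assert (Hln0 : ln 0 = 0) by (unfold ln; case Rlt_dec; intros; [exfalso; lra| reflexivity]).
    rewrite INR_0, Hln0. apply Rmult_le_pos; [apply pos_INR| exact HlnD].
  - rewrite <- ln_pow by lra.
    assert (0 < INR (S m)) by (apply lt_0_INR; lia).
    destruct Hm as [Hm|Hm]; [left; apply ln_increasing; auto| right; rewrite Hm; reflexivity].
Qed.

Theorem lemma8 :
  exists C : R,
    forall (n k : nat) (Dhat : R),
      (1 <= n)%nat -> (k < n)%nat -> C <= Dhat ->
      forall S : list (list Z),
        NoDup S ->
        (forall s, In s S -> is_hbar n k s /\ scale_energy n k (hbar_ext k s) < Dhat) ->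
        ln (INR (length S)) <= C * (INR (2 ^ n) / INR (2 ^ k)) * ln Dhat.
Proof.
  exists 15. intros n k D _ Hk HD hs HN Hhs.
  destruct (Nat.le_exists_sub (S k) n Hk) as [P [HnP _]].
  rewrite Nat.add_comm in HnP. subst n.
  assert (HlnD : 0 <= ln D) by (rewrite <- ln_1; left; apply ln_increasing; lra).
  assert (Hratio : INR (2 ^ (S k + P)) / INR (2 ^ k) = 2 * INR (2 ^ P)).
  { rewrite Nat.pow_add_r, Nat.pow_succ_r', !mult_INR.
    assert (0 < INR (2 ^ k)) by (apply lt_0_INR, Nat.neq_0_lt_0, Nat.pow_nonzero; lia).
    simpl (INR 2). field. lra. }
  eapply Rle_trans; [apply ln_le_of_le_pow; [|apply (count_hbar k P D hs)]; auto; lra|].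
  rewrite Hratio, mult_INR. replace (INR 15) with 15 by (simpl; ring).
  pose proof (pos_INR (2 ^ P)). nra.
Qed.
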